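(* Let $H$ be a history generated by KSFTM and $T_i$ a transaction of $H$. If (after the last event of $H$) $tutl_i < ct_i$, then there exists a transaction $T_j$ committed in $H$ with $wts_j > wts_i$.
   Context: Algorithm KSFTM (parameters $K\ge1$, $C>0$, $incVal\ge1$). Global atomic counter $G\_tCntr$, initially 1. Each t-object $x$ stores at most $K$ versions $\langle ts, val, rl, vrt\rangle$; initially $\langle 0,0,\emptyset,0\rangle$; a version with timestamp $ts>0$ is installed only by a committing transaction $T_j$ as $\langle wts_j, v, \emptyset, tltl_j\rangle$. Transaction $T_i$ has $its_i, cts_i, wts_i$, limits $tltl_i, tutl_i$, commit time $ct_i$, flag $valid_i$, status. begin($its$): $cts_i$ := counter value, counter atomically incremented; $its_i := cts_i$ if $its$ nil else $its$; $wts_i := cts_i + C(cts_i-its_i)$; $tltl_i := cts_i$; $tutl_i := ct_i := \infty$. read($x$) (non-local): $cur$ := version with largest $ts < wts_i$ (abort if none); if a version $next$ with smallest $ts>wts_i$ exists, $tutl_i := \min(tutl_i, next.vrt-1)$; $tltl_i := \max(tltl_i, cur.vrt+1)$; abort if $tltl_i > tutl_i$; otherwise record the read in $cur.rl$. tryC: abort if $valid_i$ false; for written $x$: $prev_x$ (largest $ts<wts_i$, abort if none), $next_x$ (smallest $ts>wts_i$); conflict checks against readers of $prev_x$ with larger $wts$ (abort $T_i$ or mark them); $tltl_i := \max(tltl_i, prev_x.vrt+1)$, $tutl_i := \min(tutl_i, next_x.vrt-1)$; $ct_i$ := counter atomically increased by $incVal$ (new value); $tutl_i := \min(tutl_i,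 ct_i)$; abort if $tltl_i > tutl_i$; checks against readers $T_k$ of $prev_x$ with smaller $wts$ and $tltl_k \ge tutl_i$ (abort $T_i$ or mark $T_k$); then $tltl_i := tutl_i$; for such unaborted readers $T_k$, $tutl_k := \min(tutl_k, tltl_i-1)$; invalidate marked transactions; install for each written $x$ the version $\langle wts_i, v, \emptyset, tltl_i\rangle$; commit. abort: $valid_i$ false, status abort. *)

(* An operational model of the KSFTM algorithm:
   every operation (begin, read, write, tryC, tryA) is executed atomically;
   a history is the sequence of operations issued, and the state reached
   after its last event records all algorithm variables. *)
From mathcomp Require Import all_boot all_order all_algebra.
Set Implicit Arguments. Unset Strict Implicit. Unset Printing Implicit Defensive.
Import Order.TTheory GRing.Theory Num.Theory.
Local Open Scope ring_scope.

Inductive ext := Fin of nat | Inf.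
Definition emin (a b : ext) : ext :=
  match a, b with
  | Fin m, Fin n => Fin (minn m n)
  | Fin m, Inf => Fin m
  | Inf, _ => b
  end.
Definition elt (a b : ext) : bool :=
  match a, b with
  | Fin m, Fin n => (m < n)%N
  | Fin _, Inf => true
  | Inf, _ => false
  end.
Definition ngt (n : nat) (e : ext) : bool :=
  match e with Fin m => (m < n)%N | Inf => false end.
Definition nge (n : nat) (e : ext) : bool :=
  match e with Fin m => (m <= n)%N | Inf => false end.

Inductive status := Live | Committed | Aborted.
Definition is_aborted (st : status) : bool :=
  match st with Aborted => true | _ => false end.
Definition is_live (st : status) : bool :=
  match st with Live => true | _ => false end.

Section KSFTM.
Variable R : realFieldType.

(* a version <ts, val, rl, vrt> ; t-object values are natural numbers,
   transaction ids and t-object ids are natural numbers *)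
Record Ver := mkVer { v_ts : R; v_val : nat; v_rl : seq nat; v_vrt : nat }.
Definition v0 : Ver := mkVer 0 0 [::] 0.

Record Tx := mkTx {
  t_its : nat; t_cts : nat; t_wts : R;
  t_tltl : nat; t_tutl : ext; t_ct : ext;
  t_valid : bool; t_status : status;
  t_rs : seq (nat * nat);   (* local read set  (x, value) *)
  t_ws : seq (nat * nat)    (* local write set (x, value) *)
}.

Record St := mkSt {
  cntr : nat;
  txs : nat -> option Tx;     (* None : transaction not (yet) begun *)
  objs : nat -> seq Ver
}.

Definition init_st : St :=
  mkSt 1 (fun _ => None) (fun _ => [:: v0]).

Definition set_tltl (t : Tx) n := mkTx (t_its t) (t_cts t) (t_wts t) n (t_tutl t)
  (t_ct t) (t_valid t) (t_status t) (t_rs t) (t_ws t).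
Definition set_tutl (t : Tx) e := mkTx (t_its t) (t_cts t) (t_wts t) (t_tltl t) e
  (t_ct t) (t_valid t) (t_status t) (t_rs t) (t_ws t).
Definition set_ct (t : Tx) e := mkTx (t_its t) (t_cts t) (t_wts t) (t_tltl t) (t_tutl t)
  e (t_valid t) (t_status t) (t_rs t) (t_ws t).
Definition set_valid (t : Tx) b := mkTx (t_its t) (t_cts t) (t_wts t) (t_tltl t) (t_tutl t)
  (t_ct t) b (t_status t) (t_rs t) (t_ws t).
Definition set_status (t : Tx) st := mkTx (t_its t) (t_cts t) (t_wts t) (t_tltl t) (t_tutl t)
  (t_ct t) (t_valid t) st (t_rs t) (t_ws t).
Definition set_rs (t : Tx) l := mkTx (t_its t) (t_cts t) (t_wts t) (t_tltl t) (t_tutl t)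
  (t_ct t) (t_valid t) (t_status t) l (t_ws t).
Definition set_ws (t : Tx) l := mkTx (t_its t) (t_cts t) (t_wts t) (t_tltl t) (t_tutl t)
  (t_ct t) (t_valid t) (t_status t) (t_rs t) l.

Definition upd_tx (s : St) (i : nat) (t : Tx) : St :=
  mkSt (cntr s) (fun k => if k == i then Some t else txs s k) (objs s).
Definition upd_obj (s : St) (x : nat) (vs : seq Ver) : St :=
  mkSt (cntr s) (txs s) (fun y => if y == x then vs else objs s y).
Definition set_cntr (s : St) (n : nat) : St := mkSt n (txs s) (objs s).
Definition map_tx (f : Tx -> Tx) (s : St) (k : nat) : St :=
  match txs s k with Some tk => upd_tx s k (f tk) | None => s end.

Definition abort_tx (t : Tx) : Tx := set_status (set_valid t false) Aborted.
Definition do_abort (s : St) (i : nat) (t : Tx) : St := upd_tx s i (abort_tx t).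

Fixpoint assoc (x : nat) (l : seq (nat * nat)) : option nat :=
  match l with
  | [::] => None
  | (y, v) :: l' => if y == x then Some v else assoc x l'
  end.

Definition prev_idx (w : R) (vs : seq Ver) : option nat :=
  foldr (fun k acc =>
    let v := nth v0 vs k in
    if v_ts v < w then
      match acc with
      | Some b => if v_ts (nth v0 vs b) < v_ts v then Some k else acc
      | None => Some k
      end
    else acc) None (iota 0 (size vs)).

Definition next_idx (w : R) (vs : seq Ver) : option nat :=
  foldr (fun k acc =>
    let v := nth v0 vs k in
    if w < v_ts v then
      match acc with
      | Some b => if v_ts v < v_ts (nth v0 vs b) then Some k else acc
      | None => Some k
      end
    else acc) None (iota 0 (size vs)).

Definition min_idx (vs : seq Ver) : nat :=
  foldr (fun k b => if v_ts (nth v0 vs k) < v_ts (nth v0 vs b) then k else b)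
    0%N (iota 0 (size vs)).

Definition install (K : nat) (nv : Ver) (vs : seq Ver) : seq Ver :=
  if (size vs < K)%N then rcons vs nv
  else let j := min_idx vs in rcons (take j vs ++ drop j.+1 vs) nv.

Definition next_tutl (w : R) (vs : seq Ver) (tu : ext) : ext :=
  match next_idx w vs with
  | Some n => emin tu (Fin (v_vrt (nth v0 vs n)).-1)
  | None => tu
  end.

Definition read_nl (s : St) (i : nat) (t : Tx) (x : nat) : St :=
  let vs := objs s x in
  match prev_idx (t_wts t) vs with
  | None => do_abort s i t
  | Some c =>
    let cur := nth v0 vs c in
    let t1 := set_tutl t (next_tutl (t_wts t) vs (t_tutl t)) in
    let t2 := set_tltl t1 (maxn (t_tltl t1) (v_vrt cur).+1) in
    if ngt (t_tltl t2) (t_tutl t2) then do_abort s i t2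
    else
      let cur' := mkVer (v_ts cur) (v_val cur) (i :: v_rl cur) (v_vrt cur) in
      upd_obj (upd_tx s i (set_rs t2 ((x, v_val cur) :: t_rs t2))) x
              (set_nth v0 vs c cur')
  end.

Definition wts_of (s : St) (k : nat) : option R :=
  match txs s k with Some tk => Some (t_wts tk) | None => None end.
Definition larger_reader (s : St) (w : R) (k : nat) : bool :=
  match wts_of s k with Some wk => w < wk | None => false end.
Definition smaller_reader (s : St) (w : R) (k : nat) : bool :=
  match wts_of s k with Some wk => wk < w | None => false end.
Definition tltl_ge (s : St) (tu : nat) (k : nat) : bool :=
  match txs s k with Some tk => (tu <= t_tltl tk)%N | None => false end.

(* first loop of tryC over the written objects: prev_x / next_x, conflict
   checks against readers of prev_x with larger wts (the choice
   "abort T_i (true) or mark T_k (false)" is given by d), tltl/tutl update.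
   Result: inl t = T_i aborts with record t; inr (t, marked). *)
Fixpoint phaseA (s : St) (d : nat -> nat -> bool) (ws : seq (nat * nat))
    (t : Tx) (mk : seq nat) : Tx + (Tx * seq nat) :=
  match ws with
  | [::] => inr (t, mk)
  | (x, _) :: ws' =>
    let vs := objs s x in
    match prev_idx (t_wts t) vs with
    | None => inl t
    | Some p =>
      let pv := nth v0 vs p in
      let big := [seq k <- v_rl pv | larger_reader s (t_wts t) k] in
      if has (d x) big then inl t else
      let t1 := set_tltl t (maxn (t_tltl t) (v_vrt pv).+1) in
      let t2 := set_tutl t1 (next_tutl (t_wts t) vs (t_tutl t1)) in
      phaseA s d ws' t2 (big ++ mk)
    end
  end.

Definition small_readers (s : St) (w : R) (ws : seq (nat * nat)) : seq nat :=
  flatten [seq match prev_idx w (objs s xv.1) with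
               | Some p => [seq k <- v_rl (nth v0 (objs s xv.1) p) | smaller_reader s w k]
               | None => [::]
               end | xv <- ws].

(* second conflict check: readers T_k of prev_x with smaller wts and
   tltl_k >= tutl_i; choice given by d. None = T_i aborts, Some marked. *)
Definition phaseB (s : St) (d : nat -> nat -> bool) (w : R) (tu : nat)
    (ws : seq (nat * nat)) : option (seq nat) :=
  foldr (fun xv acc =>
    match acc with
    | None => None
    | Some mk =>
      match prev_idx w (objs s xv.1) with
      | None => acc
      | Some p =>
        let cf := [seq k <- v_rl (nth v0 (objs s xv.1) p)
                   | smaller_reader s w k && tltl_ge s tu k] in
        if has (d xv.1) cf then None else Some (cf ++ mk)
      end
    end) (Some [::]) ws.

Variables (K : nat) (C : R) (incVal : nat).

Definition tryC (s : St) (i : nat) (t : Tx) (dA dB : nat -> nat -> bool) : St :=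
  if ~~ t_valid t then do_abort s i t else
  match phaseA s dA (t_ws t) t [::] with
  | inl t' => do_abort s i t'
  | inr (t1, mkA) =>
    let ctv := (cntr s + incVal)%N in
    let s1 := set_cntr s ctv in
    let t2 := set_tutl (set_ct t1 (Fin ctv)) (emin (t_tutl t1) (Fin ctv)) in
    if ngt (t_tltl t2) (t_tutl t2) then do_abort s1 i t2 else
    let tu := match t_tutl t2 with Fin n => n | Inf => ctv end in
    match phaseB s dB (t_wts t2) tu (t_ws t2) with
    | None => do_abort s1 i t2
    | Some mkB =>
      let t3 := set_tltl t2 tu in
      let s2 := foldl (map_tx (fun tk => if is_aborted (t_status tk) then tk
                                 else set_tutl tk (emin (t_tutl tk) (Fin tu.-1))))
                      s1 (small_readers s (t_wts t2) (t_ws t2)) in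
      let s3 := foldl (map_tx (fun tk => set_valid tk false)) s2 (mkA ++ mkB) in
      let s4 := foldl (fun s' xv =>
                   upd_obj s' xv.1 (install K (mkVer (t_wts t2) xv.2 [::] tu) (objs s' xv.1)))
                  s3 (t_ws t2) in
      upd_tx s4 i (set_status t3 Committed)
    end
  end.

Inductive event :=
  | EBegin of nat & option nat  (* T_i begins; its given as the its of an earlier T_k, or nil *)
  | ERead of nat & nat          (* T_i reads x *)
  | EWrite of nat & nat & nat   (* T_i writes v to x *)
  | ETryC of nat
  | ETryA of nat.

Inductive step : St -> event -> St -> Prop :=
  | st_begin s i oits :
      txs s i = None ->
      (forall k, oits = Some k -> txs s k <> None) ->
      let cts := cntr s in
      let its := match oits with
                 | Some k => match txs s k with Some tk => t_its tk | None => cts end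
                 | None => cts end in
      let wts := cts%:R + C * (cts - its)%N%:R in
      step s (EBegin i oits)
        (upd_tx (set_cntr s cts.+1) i
           (mkTx its cts wts cts Inf Inf true Live [::] [::]))
  | st_read_local s i x t :
      txs s i = Some t -> is_live (t_status t) ->
      (assoc x (t_ws t) != None) || (assoc x (t_rs t) != None) ->
      step s (ERead i x) s
  | st_read s i x t :
      txs s i = Some t -> is_live (t_status t) ->
      assoc x (t_ws t) = None -> assoc x (t_rs t) = None ->
      step s (ERead i x) (read_nl s i t x)
  | st_write s i x v t :
      txs s i = Some t -> is_live (t_status t) ->
      step s (EWrite i x v)
        (upd_tx s i (set_ws t ((x, v) :: [seq yw <- t_ws t | yw.1 != x])))
  | st_tryC s i t dA dB :
      txs s i = Some t -> is_live (t_status t) ->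
      step s (ETryC i) (tryC s i t dA dB)
  | st_tryA s i t :
      txs s i = Some t -> is_live (t_status t) ->
      step s (ETryA i) (do_abort s i t).

(* gen H s : the history H (sequence of events, oldest first) is generated
   by KSFTM and s is the state after its last event *)
Inductive gen : seq event -> St -> Prop :=
  | gen_nil : gen [::] init_st
  | gen_snoc H s e s' : gen H s -> step s e s' -> gen (rcons H e) s'.

End KSFTM.

From mathcomp Require Import all_boot all_order all_algebra.
Set Implicit Arguments. Unset Strict Implicit. Unset Printing Implicit Defensive.
Import Order.TTheory GRing.Theory Num.Theory.
Local Open Scope ring_scope.

(* Call tutl_i < ct_i a "gap" of T_i. A gap can only open because of a committed
   transaction with larger wts.  A read or tryC lowers tutl_i only through a
   version with timestamp > wts_i, and every version with positive timestamp was
   installed by a committed transaction with exactly that wts (the initial versions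
   have timestamp 0 <= wts_i).  When T_i itself closes, ct_i becomes the current
   counter value and tutl_i is capped by it, which opens no new gap.  A committing
   T_j lowers tutl_k only for readers with wts_k < wts_j.  Hence
   [ksftm_inv] is preserved by every step. *)

Lemma iter_invariant (T U : Type) (h : T -> U) (f : T -> T) n x :
  (forall y, h (f y) = h y) -> h (iter n f x) = h x.
Proof. by move=> hf; elim: n => //= n <-; apply: hf. Qed.

Section Invariant.
Variable R : realFieldType.
Implicit Types (s : St R) (t : Tx R) (v : Ver R) (w : R).

Definition committed_above s w :=
  exists j tj, txs s j = Some tj /\ t_status tj = Committed /\ w < t_wts tj.

(* Only [w >= 0] is covered: the initial version has timestamp 0 and no writer. *)
Definition covered s v :=
  forall w, 0 <= w -> w < v_ts v -> committed_above s w.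

Definition tx_ok s t :=
  [/\ 0 <= t_wts t, is_live (t_status t) -> t_ct t = Inf
    & elt (t_tutl t) (t_ct t) -> committed_above s (t_wts t)].

Definition ksftm_inv s :=
  (forall k tk, txs s k = Some tk -> tx_ok s tk) /\
  (forall x n, covered s (nth (v0 R) (objs s x) n)).

Definition commits_preserved s s' :=
  forall j tj, txs s j = Some tj -> t_status tj = Committed ->
  exists tj', [/\ txs s' j = Some tj', t_status tj' = Committed & t_wts tj' = t_wts tj].

Definition not_committed s i :=
  forall t, txs s i = Some t -> t_status t <> Committed.

Definition tx_refines s' a b :=
  [/\ t_wts b = t_wts a, t_ct b = t_ct a,
      is_live (t_status b) -> is_live (t_status a)
    & t_tutl b = t_tutl a \/ committed_above s' (t_wts a)].

Definition tx_key t := (t_wts t, t_ct t, t_status t).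

Lemma commits_preserved_refl s : commits_preserved s s.
Proof. by move=> j tj sj cj; exists tj. Qed.

Lemma commits_preserved_trans s1 s2 s3 :
  commits_preserved s1 s2 -> commits_preserved s2 s3 -> commits_preserved s1 s3.
Proof.
move=> M12 M23 j tj sj cj; have [tj2 [sj2 cj2 <-]] := M12 _ _ sj cj.
exact: M23.
Qed.

Lemma commits_preserved_txs s s' : txs s' = txs s -> commits_preserved s s'.
Proof. by move=> E j tj sj cj; exists tj; rewrite E. Qed.

Lemma commits_preserved_upd_tx s s' i t :
  commits_preserved s s' -> not_committed s i -> commits_preserved s (upd_tx s' i t).
Proof.
move=> M N j tj sj cj /=; case: eqP => [ji | _]; last exact: M.
by case: (N tj); rewrite -?ji.
Qed.

Lemma committed_above_preserved s s' w :
  commits_preserved s s' -> committed_above s w -> committed_above s' w.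
Proof.
move=> M [j [tj [sj [cj lt_w]]]]; have [tj' [sj' cj' E]] := M _ _ sj cj.
by exists j, tj'; rewrite E.
Qed.

Lemma covered_preserved s s' v :
  commits_preserved s s' -> covered s v -> covered s' v.
Proof. by move=> M cov w w0 lt_w; apply: committed_above_preserved M _; apply: cov. Qed.

Lemma covered_v0 s : covered s (v0 R).
Proof. by move=> w w0 /=; rewrite ltNge w0. Qed.

Lemma tx_ok_refines s s' a b :
  commits_preserved s s' -> tx_refines s' a b -> tx_ok s a -> tx_ok s' b.
Proof.
move=> M [wts_b ct_b live_a tutl_b] [w0 ct_inf above].
rewrite /tx_ok wts_b ct_b; split=> // [/live_a/ct_inf //|].
case: tutl_b => [-> /above|//]; exact: committed_above_preserved.
Qed.

Lemma tx_ok_preserved s s' t : commits_preserved s s' -> tx_ok s t -> tx_ok s' t.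
Proof. by move=> M; apply: tx_ok_refines M _; split=> //; left. Qed.

Lemma tx_refines_refl s t : tx_refines s t t.
Proof. by split=> //; left. Qed.

Lemma tx_refines_trans s a b c :
  tx_refines s a b -> tx_refines s b c -> tx_refines s a c.
Proof.
move=> [wb cb lb tb] [wc cc lc tc]; split; rewrite ?wc ?cc //; first by move/lc/lb.
by case: tc => [->|]; [case: tb => [->|]; [left|right] | rewrite wb; right].
Qed.

Lemma tx_refines_abort s a b : tx_refines s a b -> tx_refines s a (abort_tx b).
Proof. by case. Qed.

Lemma tx_ok_abort s t : tx_ok s t -> tx_ok s (abort_tx t).
Proof.
exact: tx_ok_refines (@commits_preserved_refl s) (tx_refines_abort (tx_refines_refl s t)).
Qed.

Lemma elt_emin_Fin a c : elt (emin a (Fin c)) (Fin c) -> elt a Inf.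
Proof. by case: a => //=; rewrite ltnn. Qed.

Lemma tx_ok_close s t b c :
  tx_ok s t -> t_ct t = Inf -> t_wts b = t_wts t -> t_ct b = Fin c ->
  t_tutl b = emin (t_tutl t) (Fin c) -> ~~ is_live (t_status b) -> tx_ok s b.
Proof.
move=> [w0 _ above] ct_inf wts_b ct_b tutl_b /negbTE live_b.
rewrite /tx_ok wts_b live_b; split=> //.
by rewrite tutl_b ct_b => /elt_emin_Fin; rewrite -ct_inf.
Qed.

Lemma txs_map_tx f s k0 k :
  txs (map_tx f s k0) k = if k == k0 then omap f (txs s k) else txs s k.
Proof.
by rewrite /map_tx; case s_k0: (txs s k0) => [t0|] /=; case: eqP => // ->; rewrite s_k0.
Qed.

Lemma txs_foldl_map_tx f l s k :
  txs (foldl (map_tx f) s l) k = omap (iter (count_mem k l) f) (txs s k).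
Proof.
elim: l s => [|k0 l IH] s /=; first by case: (txs s k).
rewrite IH txs_map_tx; case: eqVneq => _ /=; last by rewrite add0n.
by rewrite add1n; case: (txs s k) => //= t; rewrite -iterSr.
Qed.

Lemma objs_foldl_map_tx f l s : objs (foldl (map_tx f) s l) = objs s.
Proof. by elim: l s => //= k0 l IH s; rewrite IH /map_tx; case: (txs s k0). Qed.

Lemma commits_preserved_foldl_map_tx f l s :
  (forall t, tx_key (f t) = tx_key t) -> commits_preserved s (foldl (map_tx f) s l).
Proof.
move=> fK j tj sj cj; rewrite txs_foldl_map_tx sj /=.
have := iter_invariant (count_mem j l) tj fK; rewrite /tx_key => -[wE _ sE].
by eexists; split; [reflexivity | rewrite sE |].
Qed.

Lemma nth_install (P : Ver R -> Prop) K nv vs :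
  P nv -> (forall n, P (nth (v0 R) vs n)) -> forall n, P (nth (v0 R) (install K nv vs) n).
Proof.
move=> Pnv Pvs; have P0 : P (v0 R) by rewrite -(nth_default (v0 R) (leqnn (size vs))).
have Prcons vs' : (forall m, P (nth (v0 R) vs' m)) ->
    forall m, P (nth (v0 R) (rcons vs' nv) m).
  by move=> Pvs' m; rewrite nth_rcons; case: ifP => // _; case: ifP.
rewrite /install; case: ifP => _; apply: Prcons => // m.
rewrite nth_cat size_take_min nth_drop; case: ltnP => [lt_m | _]; last exact: Pvs.
by rewrite nth_take ?(leq_trans lt_m (geq_minl _ _)).
Qed.

Definition install_writes K W tu (ws : seq (nat * nat)) s :=
  foldl (fun s' xv => upd_obj s' xv.1 (install K (mkVer W xv.2 [::] tu) (objs s' xv.1)))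
    s ws.

Lemma txs_install_writes K W tu ws s : txs (install_writes K W tu ws s) = txs s.
Proof. by elim: ws s => //= xv ws IH s; rewrite IH. Qed.

Lemma nth_install_writes (P : Ver R -> Prop) K W tu ws s :
  (forall val, P (mkVer W val [::] tu)) -> (forall x n, P (nth (v0 R) (objs s x) n)) ->
  forall x n, P (nth (v0 R) (objs (install_writes K W tu ws s) x) n).
Proof.
move=> Pnew; elim: ws s => [|[y val] ws IH] s Ps //=.
apply: IH => x n /=; case: eqP => _ //; exact: nth_install.
Qed.

Lemma next_idx_lt w vs n : next_idx w vs = Some n -> w < v_ts (nth (v0 R) vs n).
Proof.
rewrite /next_idx; elim: (iota 0 (size vs)) n => [|k l IH] n //=.
case: ifP => w_lt; last exact: IH.
case E: (foldr _ _ l) => [b|]; last by case=> <-.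
by case: ifP => _; [case=> <- | move=> H; apply: IH; rewrite E].
Qed.

Lemma next_tutl_refines s w vs tu :
  0 <= w -> (forall n, covered s (nth (v0 R) vs n)) ->
  next_tutl w vs tu = tu \/ committed_above s w.
Proof.
move=> w0 cov; rewrite /next_tutl; case E: next_idx => [n|]; last by left.
by right; apply: (cov n) w0 (next_idx_lt E).
Qed.

Definition phaseA_tx (r : Tx R + (Tx R * seq nat)) :=
  match r with inl t' => t' | inr (t', _) => t' end.

Lemma phaseA_refines s d ws t mk :
  0 <= t_wts t -> (forall x n, covered s (nth (v0 R) (objs s x) n)) ->
  tx_refines s t (phaseA_tx (phaseA s d ws t mk)).
Proof.
move=> + cov; elim: ws t mk => [|[x val] ws IH] t mk w0 /=; first exact: tx_refines_refl.
case: prev_idx => [p|]; last exact: tx_refines_refl.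
case: ifP => _; first exact: tx_refines_refl.
set t2 := set_tutl _ _; apply: (tx_refines_trans _ (IH t2 _ w0)); split=> //.
exact: next_tutl_refines w0 (cov x).
Qed.

Lemma mem_small_readers s w ws k :
  k \in small_readers s w ws -> exists tk, txs s k = Some tk /\ t_wts tk < w.
Proof.
elim: ws => [|xv ws IH] //=; rewrite mem_cat => /orP[|/IH //].
case: prev_idx => [p|] //; rewrite mem_filter => /andP[].
by rewrite /smaller_reader /wts_of; case: (txs s k) => [tk|] // lt_w _; exists tk.
Qed.

Lemma inv_upd_tx s i t :
  ksftm_inv s -> not_committed s i -> tx_ok s t -> ksftm_inv (upd_tx s i t).
Proof.
move=> [txs_ok objs_ok] N ok_t.
have M := commits_preserved_upd_tx t (@commits_preserved_refl s) N.
split=> [k tk /= | x n]; last exact: covered_preserved M (objs_ok x n).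
by case: eqP => [_ [<-] | _ /txs_ok ok_k]; apply: (tx_ok_preserved M).
Qed.

Lemma inv_upd_obj s x vs :
  ksftm_inv s -> (forall n, covered s (nth (v0 R) vs n)) -> ksftm_inv (upd_obj s x vs).
Proof.
move=> [txs_ok objs_ok] cov; split=> [k tk /txs_ok ok_k | y n /=]; first exact: ok_k.
by case: eqP => _; [exact: cov | exact: objs_ok].
Qed.

Lemma live_not_committed s i t :
  txs s i = Some t -> is_live (t_status t) -> not_committed s i.
Proof. by move=> si live t0; rewrite si => -[<-]; case: (t_status t) live. Qed.

Lemma inv_read_nl s i t x :
  ksftm_inv s -> txs s i = Some t -> is_live (t_status t) -> ksftm_inv (read_nl s i t x).
Proof.
move=> I si live; have [txs_ok objs_ok] := I; have ok_t := txs_ok _ _ si.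
have [w0 _ _] := ok_t; have N := live_not_committed si live.
have M t' : commits_preserved s (upd_tx s i t').
  exact: commits_preserved_upd_tx (@commits_preserved_refl s) N.
have upd_ok t' : tx_refines s t t' -> ksftm_inv (upd_tx s i t').
  by move=> ref; apply/(inv_upd_tx I N)/(tx_ok_refines (@commits_preserved_refl s) ref).
rewrite /read_nl; case: prev_idx => [c|]; last first.
  exact/upd_ok/tx_refines_abort/tx_refines_refl.
set t2 := set_tltl _ _.
have ref2 : tx_refines s t t2 by split=> //; exact: next_tutl_refines w0 (objs_ok x).
case: ifP => _; first exact/upd_ok/tx_refines_abort.
apply: inv_upd_obj; first exact: upd_ok.
move=> n; rewrite nth_set_nth /=; apply: (covered_preserved (M _)).
by case: eqP => _; [exact: objs_ok x c | exact: objs_ok].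
Qed.

(* In tryC, [f] caps the tutl of the readers with smaller wts and [g] invalidates
   the marked transactions. *)
Lemma inv_commit s i tf (f g : Tx R -> Tx R) readers marked K W tu ws c :
  ksftm_inv s -> not_committed s i ->
  (forall t, tx_key (f t) = tx_key t) ->
  (forall t, tx_key (g t) = tx_key t /\ t_tutl (g t) = t_tutl t) ->
  (forall k, k \in readers -> exists tk, txs s k = Some tk /\ t_wts tk < W) ->
  t_wts tf = W -> t_status tf = Committed -> tx_ok s tf ->
  ksftm_inv (upd_tx (install_writes K W tu ws
    (foldl (map_tx g) (foldl (map_tx f) (set_cntr s c) readers) marked)) i tf).
Proof.
move=> [txs_ok objs_ok] N fK gK readers_below wts_f st_f ok_f.
set s1 := foldl (map_tx f) _ readers; set s2 := foldl (map_tx g) s1 marked.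
set s' := upd_tx _ i tf.
have M : commits_preserved s s'.
  apply: commits_preserved_upd_tx N; apply: (@commits_preserved_trans _ s1).
    exact: (@commits_preserved_foldl_map_tx f readers (set_cntr s c) fK).
  apply: (@commits_preserved_trans _ s2).
    exact: (@commits_preserved_foldl_map_tx g marked s1 (fun t => (gK t).1)).
  exact/commits_preserved_txs/txs_install_writes.
have above w : w < W -> committed_above s' w by exists i, tf; rewrite /= eqxx wts_f.
split=> [k tk | x n].
  rewrite /=; case: eqP => [_ [<-] | _]; first exact: tx_ok_preserved M ok_f.
  rewrite txs_install_writes !txs_foldl_map_tx /=.
  case s_k: (txs s k) => [a|] //= [<-].
  apply: tx_ok_refines M _ (txs_ok _ _ s_k).
  have : tx_key (iter (count_mem k marked) g (iter (count_mem k readers) f a)) = tx_key a.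
    by rewrite (iter_invariant _ _ (fun t => (gK t).1)) (iter_invariant _ _ fK).
  case=> wts_b ct_b st_b; split; rewrite ?wts_b ?ct_b ?st_b //.
  case: (boolP (k \in readers)) => [/readers_below [tk' [s_k' lt_W]] | /count_memPn ->].
    by right; apply: above; move: lt_W; rewrite s_k in s_k'; case: s_k' => <-.
  by left; apply: iter_invariant (fun t => (gK t).2).
apply: nth_install_writes => [val w _ /above // | y m].
by rewrite !objs_foldl_map_tx; apply: covered_preserved M (objs_ok y m).
Qed.

Lemma inv_tryC K incVal s i t dA dB :
  ksftm_inv s -> txs s i = Some t -> is_live (t_status t) ->
  ksftm_inv (tryC K incVal s i t dA dB).
Proof.
move=> I si live; have [txs_ok objs_ok] := I; have ok_t := txs_ok _ _ si.
have [w0 ct_inf _] := ok_t; have N := live_not_committed si live.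
rewrite /tryC; case: ifP => _; first exact: inv_upd_tx I N (tx_ok_abort ok_t).
have := phaseA_refines dA (t_ws t) [::] w0 objs_ok.
case: phaseA => [t'|[t1 mkA]] /= ref1.
  exact: inv_upd_tx I N (tx_ok_abort (tx_ok_refines (@commits_preserved_refl s) ref1 ok_t)).
have ok_t1 := tx_ok_refines (@commits_preserved_refl s) ref1 ok_t.
have ct_t1 : t_ct t1 = Inf by case: ref1 => _ -> _ _; exact: ct_inf.
have close := tx_ok_close ok_t1 ct_t1.
set c := (cntr s + incVal)%N.
case: ifP => _; first by apply: (@inv_upd_tx (set_cntr s c)) => //; exact: close.
case: phaseB => [mkB|]; last by apply: (@inv_upd_tx (set_cntr s c)) => //; exact: close.
apply: inv_commit => //; last exact: close.
- by move=> tk; rewrite /tx_key; case: ifP.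
- by move=> k /mem_small_readers.
Qed.

Lemma inv_step K (C : R) incVal s e s' :
  0 <= C -> ksftm_inv s -> step K C incVal s e s' -> ksftm_inv s'.
Proof.
move=> C0 + st; case: s e s' / st
  => [s i oits si_none _ cts its wts | // | s i x t si live _ _
     | s i x val t si live | s i t dA dB si live | s i t si live] I.
- apply: (@inv_upd_tx (set_cntr s cts.+1)) => [//| t0 /= | /=]; first by rewrite si_none.
  by split=> //; rewrite /wts addr_ge0 ?mulr_ge0.
- exact: inv_read_nl.
- have ok_t := I.1 _ _ si; apply: inv_upd_tx I (live_not_committed si live) _; exact ok_t.
- exact: inv_tryC.
- exact: inv_upd_tx I (live_not_committed si live) (tx_ok_abort (I.1 _ _ si)).
Qed.

Lemma inv_gen K (C : R) incVal H s : 0 <= C -> gen K C incVal H s -> ksftm_inv s.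
Proof.
move=> C0; elim=> [|H' s0 e s1 _ IH st]; last exact: inv_step st.
by split=> // x [|n] /=; rewrite ?nth_nil; apply: covered_v0.
Qed.

End Invariant.

Theorem lemma15 (R : realFieldType) (K : nat) (C : R) (incVal : nat)
  (HK : (1 <= K)%N) (HC : 0 < C) (Hinc : (1 <= incVal)%N)
  (H : seq event) (s : St R) :
  gen K C incVal H s ->
  forall (i : nat) (ti : Tx R), txs s i = Some ti ->
  elt (t_tutl ti) (t_ct ti) ->
  exists (j : nat) (tj : Tx R),
    txs s j = Some tj /\ t_status tj = Committed /\ t_wts ti < t_wts tj.
Proof.
move=> G i ti si; have [_ _ above] := (inv_gen (ltW HC) G).1 _ _ si; exact: above.
Qed.
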